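(* Let $G_1$ be the planar symmetry group of a periodic isonemal prefabric, and suppose $G_1$ is of crystallographic type $pgg$ or $pmg$, with its reflection and glide-reflection axes at $45^\circ$ to the strand directions. Consider a rectangular lattice unit of $G_1$ whose corners are centres of half-turn symmetries; the nine points consisting of its four corners, the four midpoints of its sides, and its centre are all centres of half-turns (with or without side reversal). Then either all nine of these half-turn centres lie at cell corners or cell centres, or all nine lie on cell boundaries but not at cell corners.
   Context: A prefabric consists of two perpendicular layers of parallel strands of unit width: warps (vertical) and wefts (horizontal). The plane is divided into unit square cells, each cell being where one warp crosses one weft. Each cell is coloured dark if the warp is on top as seen from the front, and pale if the weft is on top. A symmetry is an isometry of the plane that maps strands to strands and preserves which strand lies on top at each crossing. Such an isometry may need to be combined with the reversal $\tau$ of the two sides of the prefabric; if so it is called side-reversing, and otherwise side-preserving. The prefabric is isonemal if its symmetry group acts transitively on the set of strands. $G_1$ denotes the group of planar isometries underlying the symmetries. A half-turn centre of such a symmetry necessarily lies at a cell corner, at a cell centre, or at the midpoint of a cell edge. *)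

From Stdlib Require Import ZArith.
Open Scope Z_scope.

(* We use DOUBLED integer coordinates on the plane: the cell (i,j) is the
   unit square whose centre has doubled coordinates (2i+1, 2j+1); cell
   corners are the points with both doubled coordinates even, cell centres
   have both odd, and midpoints of cell edges have exactly one odd.
   Warp i is the vertical strand through the cells (i,_) (column), weft j is
   the horizontal strand through the cells (_,j) (row). *)

(* A prefabric: fab i j = true iff cell (i,j) is dark (warp on top seen
   from the front), false iff pale (weft on top). *)
Definition prefabric := Z -> Z -> bool.

(* Isometries of the plane mapping strands to strands (i.e. the grid to
   itself): p |-> L p + t where L is one of the 8 signed permutation
   matrices and t is an integer translation (even in doubled coordinates). *)
Record giso := GI { sw : bool; nx : bool; ny : bool; tx : Z; ty : Z }.

Definition sgn (b : bool) (a : Z) : Z := if b then - a else a.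

Definition app (g : giso) (p : Z * Z) : Z * Z :=
  let ab := if sw g then (snd p, fst p) else p in
  (sgn (nx g) (fst ab) + tx g, sgn (ny g) (snd ab) + ty g).

Definition valid (g : giso) : Prop := Z.Even (tx g) /\ Z.Even (ty g).

(* (g, rev) is a symmetry of the prefabric: side-preserving if rev = false,
   side-reversing (combined with tau) if rev = true.  When g interchanges
   the strand directions (sw g = true) the strand on top at a cell becomes
   a strand of the other direction, so the colour is complemented; tau
   complements the colour as well. *)
Definition is_sym (fab : prefabric) (g : giso) (rev : bool) : Prop :=
  valid g /\
  forall i j i' j' : Z,
    app g (2 * i + 1, 2 * j + 1) = (2 * i' + 1, 2 * j' + 1) ->
    fab i' j' = xorb (fab i j) (xorb (sw g) rev).

Definition inG1 (fab : prefabric) (g : giso) : Prop :=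
  exists rev : bool, is_sym fab g rev.

Inductive strand := Warp (i : Z) | Weft (j : Z).

Definition strand_img (g : giso) (s : strand) : strand :=
  match s with
  | Warp i =>
      let c := 2 * i + 1 in
      if sw g then Weft ((sgn (ny g) c + ty g - 1) / 2)
      else Warp ((sgn (nx g) c + tx g - 1) / 2)
  | Weft j =>
      let c := 2 * j + 1 in
      if sw g then Warp ((sgn (nx g) c + tx g - 1) / 2)
      else Weft ((sgn (ny g) c + ty g - 1) / 2)
  end.

Definition isonemal (fab : prefabric) : Prop :=
  forall s s' : strand, exists g, inG1 fab g /\ strand_img g s = s'.

Definition is_translation (g : giso) : Prop :=
  sw g = false /\ nx g = false /\ ny g = false.

Definition periodic (fab : prefabric) : Prop :=
  exists g h : giso,
    is_translation g /\ is_translation h /\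
    is_sym fab g false /\ is_sym fab h false /\
    tx g * ty h - ty g * tx h <> 0.

Definition in_transl (fab : prefabric) (t : Z * Z) : Prop :=
  exists g, inG1 fab g /\ is_translation g /\ tx g = fst t /\ ty g = snd t.

Definition halfturn_centre (fab : prefabric) (c : Z * Z) : Prop :=
  exists g, inG1 fab g /\ sw g = false /\ nx g = true /\ ny g = true /\
            app g c = c.

(* The point group (linear parts of G_1) is {I, -I, S, -S} where
   S : (x,y) |-> (y,x) and -S : (x,y) |-> (-y,-x) are the reflections in
   the two diagonals: a point group D2 whose reflection directions are at
   45 degrees to the strands. *)
Definition diag_point_group (fab : prefabric) : Prop :=
  (forall g, inG1 fab g -> nx g = ny g) /\
  (forall s n : bool, exists g, inG1 fab g /\ sw g = s /\ nx g = n /\ ny g = n).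

(* G_1 contains a (genuine) reflection with linear part S (b = false) or
   -S (b = true), i.e. such an element with a fixed point. *)
Definition has_mirror (fab : prefabric) (b : bool) : Prop :=
  exists g, inG1 fab g /\ sw g = true /\ nx g = b /\ ny g = b /\
            exists p, app g p = p.

(* Among the wallpaper groups with point group D2 (pmm, pmg, pgg, cmm),
   pgg is the one with no reflections and pmg the one with reflections in
   exactly one of the two directions. *)
Definition type_pgg_45 (fab : prefabric) : Prop :=
  diag_point_group fab /\ ~ has_mirror fab false /\ ~ has_mirror fab true.

Definition type_pmg_45 (fab : prefabric) : Prop :=
  diag_point_group fab /\ (has_mirror fab false <-> ~ has_mirror fab true).

Definition rect_lattice_unit (fab : prefabric) (P u v : Z * Z) : Prop :=
  in_transl fab u /\ in_transl fab v /\
  fst u * fst v + snd u * snd v = 0 /\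
  (forall t, in_transl fab t ->
     exists m n : Z, fst t = m * fst u + n * fst v /\
                     snd t = m * snd u + n * snd v).

Definition half_pt (P u v : Z * Z) (a b : Z) : Z * Z :=
  (fst P + (a * fst u + b * fst v) / 2, snd P + (a * snd u + b * snd v) / 2).

Definition corner_or_centre (p : Z * Z) : Prop :=
  (Z.Even (fst p) /\ Z.Even (snd p)) \/ (Z.Odd (fst p) /\ Z.Odd (snd p)).

Definition boundary_not_corner (p : Z * Z) : Prop :=
  (Z.Even (fst p) \/ Z.Even (snd p)) /\ ~ (Z.Even (fst p) /\ Z.Even (snd p)).

From Stdlib Require Import ZArith Lia.
Open Scope Z_scope.

(* Coordinates are doubled, so translation vectors of G_1 have
   even coordinates and a half-turn centre shifted by half a translation is
   again a half-turn centre (compose the half-turn with the translation).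
   This gives the first claim: the nine points are P + (a u + b v)/2.
   For the second claim, let S_b (b = false: (x,y) |-> (y,x); b = true:
   (x,y) |-> (-y,-x)) be a diagonal linear part and g in G_1 a glide with
   linear part S_b.  Its square is a translation, and composing g with a
   translation t shifts the invariant "x + sgn b y" of its translation part
   by that of t; when this invariant vanishes the glide is a reflection.
   So a translation (2a, 2b) with a + b odd would produce mirrors in BOTH
   diagonal directions, which pgg and pmg forbid.  Hence every half
   translation has even coordinate sum, the nine points all have the
   coordinate-sum parity of P, and this parity decides between "corner or
   centre" (even) and "on a boundary, not a corner" (odd). *)

Lemma even_sgn_add (b : bool) (a c : Z) :
  Z.Even a -> Z.Even c -> Z.Even (sgn b a + c).
Proof.
  intros [k Hk] [l Hl]; destruct b; unfold sgn;
    [exists (l - k) | exists (k + l)]; lia.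
Qed.

Lemma app_even (g : giso) (p : Z * Z) :
  valid g -> Z.Even (fst p) -> Z.Even (snd p) ->
  Z.Even (fst (app g p)) /\ Z.Even (snd (app g p)).
Proof.
  intros [Ex Ey] E1 E2; unfold app.
  destruct (sw g); cbn; split; apply even_sgn_add; assumption.
Qed.

Lemma sgn_odd_shift (b : bool) (i a : Z) :
  exists k, sgn b (2 * i + 1) + 2 * a = 2 * k + 1.
Proof. destruct b; unfold sgn; [exists (a - i - 1) | exists (i + a)]; lia. Qed.

Lemma app_cell_centre (h : giso) (i j : Z) :
  valid h -> exists i' j', app h (2 * i + 1, 2 * j + 1) = (2 * i' + 1, 2 * j' + 1).
Proof.
  intros [[a Ha] [b Hb]]; unfold app.
  destruct (sw h); cbn [fst snd]; rewrite Ha, Hb.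
  - destruct (sgn_odd_shift (nx h) j a) as [k1 ->];
      destruct (sgn_odd_shift (ny h) i b) as [k2 ->]; eauto.
  - destruct (sgn_odd_shift (nx h) i a) as [k1 ->];
      destruct (sgn_odd_shift (ny h) j b) as [k2 ->]; eauto.
Qed.

Lemma is_sym_compose (fab : prefabric) (g h k : giso) (r1 r2 : bool) :
  is_sym fab g r1 -> is_sym fab h r2 -> valid k ->
  sw k = xorb (sw g) (sw h) -> (forall p, app k p = app g (app h p)) ->
  is_sym fab k (xorb r1 r2).
Proof.
  intros [_ Hg] [vh Hh] vk Hsw Hk; split; [exact vk |].
  intros i j i' j' E.
  destruct (app_cell_centre h i j vh) as [k1 [k2 E2]].
  rewrite Hk, E2 in E.
  rewrite (Hg _ _ _ _ E), (Hh _ _ _ _ E2), Hsw.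
  destruct (fab i j), (sw g), (sw h), r1, r2; reflexivity.
Qed.

Lemma inG1_valid (fab : prefabric) (g : giso) : inG1 fab g -> valid g.
Proof. intros [r [v _]]; exact v. Qed.

(* G_1 is closed under composition; validity of the composite is automatic,
   since its translation part is the image of the origin. *)
Lemma inG1_compose (fab : prefabric) (g h k : giso) :
  inG1 fab g -> inG1 fab h ->
  sw k = xorb (sw g) (sw h) -> (forall p, app k p = app g (app h p)) ->
  inG1 fab k.
Proof.
  intros [r1 H1] [r2 H2] Hsw Hk; exists (xorb r1 r2).
  assert (vk : valid k).
  { pose proof (Hk (0, 0)) as E0.
    assert (Eorig : forall f, app f (0, 0) = (tx f, ty f))
      by (intro f; unfold app, sgn; destruct (sw f), (nx f), (ny f); cbn; f_equal; lia).
    rewrite !Eorig in E0.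
    destruct (app_even g (tx h, ty h) (proj1 H1) (proj1 (proj1 H2)) (proj2 (proj1 H2)))
      as [Ex Ey].
    rewrite <- E0 in Ex, Ey; split; assumption. }
  eapply is_sym_compose; eassumption.
Qed.

Definition tr (x y : Z) : giso := GI false false false x y.

Definition diag_glide (b : bool) (t1 t2 : Z) : giso := GI true b b t1 t2.

Ltac giso_simpl :=
  unfold app, sgn, tr, diag_glide in *; cbn [fst snd sw nx ny tx ty xorb] in *.

Ltac composition_law := intros [? ?]; giso_simpl; f_equal; lia.

Lemma in_transl_iff (fab : prefabric) (x y : Z) :
  in_transl fab (x, y) <-> inG1 fab (tr x y).
Proof.
  split.
  - intros [[s n m t1 t2] [Hg [[Hs [Hn Hm]] [E1 E2]]]]; cbn in *; subst; exact Hg.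
  - intros H; exists (tr x y); repeat split; assumption.
Qed.

Lemma transl_even (fab : prefabric) (x y : Z) :
  in_transl fab (x, y) -> Z.Even x /\ Z.Even y.
Proof. rewrite in_transl_iff; intros H; exact (inG1_valid _ _ H). Qed.

Lemma transl_add (fab : prefabric) (x y x' y' : Z) :
  in_transl fab (x, y) -> in_transl fab (x', y') -> in_transl fab (x + x', y + y').
Proof.
  rewrite !in_transl_iff; intros H1 H2.
  apply (inG1_compose fab _ _ _ H1 H2); [reflexivity | composition_law].
Qed.

Lemma transl_opp (fab : prefabric) (x y : Z) :
  in_transl fab (x, y) -> in_transl fab (- x, - y).
Proof.
  rewrite !in_transl_iff; intros [r [[[a Ha] [b Hb]] H]]; exists r; split.
  - giso_simpl; split; [exists (- a) | exists (- b)]; cbn [tx ty]; lia.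
  - intros i j i' j' E.
    assert (E' : app (tr x y) (2 * i' + 1, 2 * j' + 1) = (2 * i + 1, 2 * j + 1)).
    { giso_simpl; apply pair_equal_spec in E as [E1 E2]; f_equal; lia. }
    rewrite (H _ _ _ _ E'); destruct (fab i' j'), r; reflexivity.
Qed.

Lemma transl_scale (fab : prefabric) (x y : Z) :
  in_transl fab (x, y) -> forall m, in_transl fab (m * x, m * y).
Proof.
  intros H m; induction m using Z.peano_ind.
  - replace (0 * x, 0 * y) with (x + - x, y + - y) by (f_equal; lia).
    apply transl_add, transl_opp; assumption.
  - replace (Z.succ m * x, Z.succ m * y) with (m * x + x, m * y + y) by (f_equal; lia).
    apply transl_add; assumption.
  - replace (Z.pred m * x, Z.pred m * y) with (m * x + - x, m * y + - y)
      by (f_equal; lia).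
    apply transl_add, transl_opp; assumption.
Qed.

Lemma transl_lincomb (fab : prefabric) (u v : Z * Z) (m n : Z) :
  in_transl fab u -> in_transl fab v ->
  in_transl fab (m * fst u + n * fst v, m * snd u + n * snd v).
Proof.
  destruct u, v; intros Hu Hv.
  apply transl_add; apply transl_scale; assumption.
Qed.

Lemma halfturn_translate (fab : prefabric) (c : Z * Z) (x y : Z) :
  halfturn_centre fab c -> in_transl fab (x, y) ->
  halfturn_centre fab (fst c + x / 2, snd c + y / 2).
Proof.
  intros [[s n m h1 h2] [Hh [Hs [Hn [Hm Hc]]]]] Ht; cbn [sw nx ny] in Hs, Hn, Hm; subst.
  destruct (transl_even _ _ _ Ht) as [[a ->] [b ->]].
  rewrite in_transl_iff in Ht; destruct c as [c1 c2].
  giso_simpl; apply pair_equal_spec in Hc as [Hc1 Hc2].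
  exists (GI false true true (h1 + 2 * a) (h2 + 2 * b)); repeat split.
  - apply (inG1_compose fab _ _ _ Ht Hh); [reflexivity | composition_law].
  - rewrite !(Z.mul_comm 2), !Z.div_mul by lia.
    unfold app, sgn; cbn; f_equal; lia.
Qed.

Lemma diag_glide_square (fab : prefabric) (b : bool) (t1 t2 : Z) :
  inG1 fab (diag_glide b t1 t2) ->
  in_transl fab (t1 + sgn b t2, t2 + sgn b t1).
Proof.
  intros Hg; rewrite in_transl_iff.
  apply (inG1_compose fab _ _ _ Hg Hg); [reflexivity |].
  destruct b; composition_law.
Qed.

Lemma diag_glide_shift (fab : prefabric) (b : bool) (t1 t2 l1 l2 : Z) :
  inG1 fab (diag_glide b t1 t2) -> in_transl fab (l1, l2) ->
  inG1 fab (diag_glide b (t1 + sgn b l2) (t2 + sgn b l1)).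
Proof.
  intros Hg Hl; rewrite in_transl_iff in Hl.
  apply (inG1_compose fab _ _ _ Hg Hl); [reflexivity |].
  destruct b; composition_law.
Qed.

(* A diagonal glide whose translation satisfies t1 + sgn b t2 = 0 is a
   reflection: it fixes (t1, 0). *)
Lemma diag_glide_mirror (fab : prefabric) (b : bool) (t1 t2 : Z) :
  inG1 fab (diag_glide b t1 t2) -> t1 + sgn b t2 = 0 -> has_mirror fab b.
Proof.
  intros Hg E; exists (diag_glide b t1 t2); repeat split; [exact Hg |].
  exists (t1, 0); destruct b; unfold app, sgn in *; cbn; f_equal; lia.
Qed.

(* A translation (2a, 2b) with a + b odd forces a mirror of every diagonal
   direction: shift a glide of direction b by a suitable lattice combination
   of this translation and the glide's square to kill its invariant. *)
Lemma mirror_of_odd_translation (fab : prefabric) (s : bool) (a b : Z) :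
  diag_point_group fab -> in_transl fab (2 * a, 2 * b) -> Z.Odd (a + b) ->
  has_mirror fab s.
Proof.
  intros [_ Hpg] Hl [r Hr].
  destruct (Hpg true s) as [[sw0 n m t1 t2] [Hg [Hs [Hn Hm]]]];
    cbn [sw nx ny] in Hs, Hn, Hm; subst.
  fold (diag_glide s t1 t2) in Hg.
  destruct (inG1_valid _ _ Hg) as [[c1 E1] [c2 E2]]; cbn [tx ty diag_glide] in E1, E2; subst.
  pose proof (diag_glide_square _ _ _ _ Hg) as Hsq.
  set (c := c1 + sgn s c2).
  set (q := if s then r - b else r).
  pose proof (transl_add _ _ _ _ _ (transl_scale _ _ _ Hl (- c))
                (transl_scale _ _ _ Hsq q)) as Hl'.
  apply (diag_glide_mirror _ _ _ _ (diag_glide_shift _ _ _ _ _ _ Hg Hl')).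
  subst c q; destruct s; unfold sgn; nia.
Qed.

(* In types pgg and pmg at least one diagonal direction carries no mirror,
   so every half translation has even coordinate sum. *)
Lemma half_translation_even_sum (fab : prefabric) (x y : Z) :
  type_pgg_45 fab \/ type_pmg_45 fab -> in_transl fab (x, y) ->
  Z.Even (x / 2 + y / 2).
Proof.
  intros Htype Ht.
  destruct (transl_even _ _ _ Ht) as [[a ->] [b ->]].
  rewrite !(Z.mul_comm 2), !Z.div_mul by lia.
  destruct (Z.Even_or_Odd (a + b)) as [Heven | Hodd]; [exact Heven | exfalso].
  assert (Hpg : diag_point_group fab) by (destruct Htype as [[D _] | [D _]]; exact D).
  pose proof (mirror_of_odd_translation fab false a b Hpg Ht Hodd) as Mf.
  pose proof (mirror_of_odd_translation fab true a b Hpg Ht Hodd) as Mt.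
  destruct Htype as [[_ [Nf _]] | [_ [I _]]]; [exact (Nf Mf) | exact (I Mf Mt)].
Qed.

Lemma corner_or_centre_of_even_sum (x y : Z) :
  Z.Even (x + y) -> corner_or_centre (x, y).
Proof.
  intros [m Hm]; unfold corner_or_centre; cbn.
  destruct (Z.Even_or_Odd x) as [[a Ha] | [a Ha]]; [left | right];
    (split; [exists a; lia |]); [exists (m - a) | exists (m - a - 1)]; lia.
Qed.

Lemma boundary_of_odd_sum (x y : Z) :
  Z.Odd (x + y) -> boundary_not_corner (x, y).
Proof.
  intros [m Hm]; unfold boundary_not_corner; cbn.
  destruct (Z.Even_or_Odd x) as [[a Ha] | [a Ha]].
  - split; [left; exists a; lia |]. intros [_ [b Hb]]; lia.
  - split; [right; exists (m - a); lia |]. intros [[b Hb] _]; lia.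
Qed.

Lemma even_shift_parity (p1 p2 d1 d2 : Z) :
  Z.Even (d1 + d2) ->
  (Z.Even (p1 + p2) -> Z.Even (p1 + d1 + (p2 + d2))) /\
  (Z.Odd (p1 + p2) -> Z.Odd (p1 + d1 + (p2 + d2))).
Proof.
  intros [k Hk]; split; intros [m Hm]; exists (m + k); lia.
Qed.

Theorem lemma1 (fab : prefabric) (P u v : Z * Z) :
  periodic fab ->
  isonemal fab ->
  (type_pgg_45 fab \/ type_pmg_45 fab) ->
  rect_lattice_unit fab P u v ->
  halfturn_centre fab P ->
  halfturn_centre fab (fst P + fst u, snd P + snd u) ->
  halfturn_centre fab (fst P + fst v, snd P + snd v) ->
  halfturn_centre fab (fst P + fst u + fst v, snd P + snd u + snd v) ->
  (forall a b : Z, 0 <= a <= 2 -> 0 <= b <= 2 ->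
     halfturn_centre fab (half_pt P u v a b)) /\
  ((forall a b : Z, 0 <= a <= 2 -> 0 <= b <= 2 ->
      corner_or_centre (half_pt P u v a b)) \/
   (forall a b : Z, 0 <= a <= 2 -> 0 <= b <= 2 ->
      boundary_not_corner (half_pt P u v a b))).
Proof.
  intros _ _ Htype [Hu [Hv _]] HP _ _ _.
  (* every point P + (a u + b v)/2 is P shifted by half a translation *)
  pose proof (fun a b => transl_lincomb fab u v a b Hu Hv) as Hlat.
  split.
  - intros a b _ _; exact (halfturn_translate fab P _ _ HP (Hlat a b)).
  - destruct P as [p1 p2].
    destruct (Z.Even_or_Odd (p1 + p2)) as [Hp | Hp]; [left | right];
      intros a b _ _; unfold half_pt; cbn [fst snd];
      pose proof (even_shift_parity p1 p2 _ _
                    (half_translation_even_sum fab _ _ Htype (Hlat a b))) as [He Ho].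
    + exact (corner_or_centre_of_even_sum _ _ (He Hp)).
    + exact (boundary_of_odd_sum _ _ (Ho Hp)).
Qed.
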